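(* Let $G(T)$ be the graph inverse semigroup of the unary tree $T$, endowed with a Hausdorff topology $\tau$ making it a topological semigroup. Then $(G(T),\tau)$ embeds (as a subsemigroup and topological subspace) densely into a CLP-compact topological semigroup $S$ if and only if $(G(T),\tau)$ is compact, i.e., $\tau=\tau_c$.
   Context: All spaces are Hausdorff; CLP-compact means every cover by clopen sets has a finite subcover. The unary tree $T$ has vertex set $\omega$ and edges $(n,n+1)$ with source $n$ and range $n+1$. The graph inverse semigroup $G(T)$ is the semigroup with zero $0$ generated by the vertices, the edges and formal inverses $e^{-1}$ of edges subject to: for vertices $a,b$: $ab=a$ if $a=b$, else $0$; for edges $e,f$: $s(e)e=er(e)=e$, $e^{-1}s(e)=r(e)e^{-1}=e^{-1}$, $e^{-1}f=r(e)$ if $e=f$, else $0$. The topology $\tau_c$ on $G(T)$: non-zero elements are isolated and the open neighborhoods of $0$ are the cofinite subsets containing $0$. *)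

From Stdlib Require Import Arith Lia List.

(** Vertices are the naturals, edges (n,n+1) with source n and range n+1.
    In T there is a unique path from i to k whenever i <= k.  Every non-zero
    element of G(T) has the normal form  u v^{-1}  with u, v paths and
    r(u) = r(v); we write [GPath a b c] for  u v^{-1}  where u is the path
    a -> c and v is the path b -> c (a <= c, b <= c). *)
Inductive GT : Type :=
| GZero : GT
| GPath (a b c : nat) (ha : a <= c) (hb : b <= c) : GT.

Definition max_l {a c c'} (h : a <= c) : a <= Nat.max c c' :=
  Nat.le_trans _ _ _ h (Nat.le_max_l c c').
Definition max_r {b c c'} (h : b <= c') : b <= Nat.max c c' :=
  Nat.le_trans _ _ _ h (Nat.le_max_r c c').

(** Multiplication: (u v^{-1})(w z^{-1}) = u p z^{-1} if w = v p,
    u (z q)^{-1} if v = w q, and 0 otherwise.  In T, one of v,w is a prefix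
    of the other iff they start at the same vertex. *)
Definition gmul (x y : GT) : GT :=
  match x, y with
  | GPath a b c ha _, GPath a' b' c' _ hb' =>
      if Nat.eq_dec b a' then GPath a b' (Nat.max c c') (max_l ha) (max_r hb')
      else GZero
  | _, _ => GZero
  end.

Definition gvertex (n : nat) : GT := GPath n n n (le_n n) (le_n n).
Definition gedge (n : nat) : GT :=
  GPath n (S n) (S n) (le_S _ _ (le_n n)) (le_n (S n)).
Definition gedge_inv (n : nat) : GT :=
  GPath (S n) n (S n) (le_n (S n)) (le_S _ _ (le_n n)).

Definition is_topology {X : Type} (O : (X -> Prop) -> Prop) : Prop :=
  O (fun _ => True) /\
  (forall F : (X -> Prop) -> Prop, (forall U, F U -> O U) ->
       O (fun x => exists U, F U /\ U x)) /\
  (forall U V, O U -> O V -> O (fun x => U x /\ V x)).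

Definition hausdorff {X : Type} (O : (X -> Prop) -> Prop) : Prop :=
  forall x y : X, x <> y -> exists U V, O U /\ O V /\ U x /\ V y /\
      (forall z, U z -> V z -> False).

Definition continuous_mul {X : Type} (O : (X -> Prop) -> Prop)
  (m : X -> X -> X) : Prop :=
  forall x y W, O W -> W (m x y) ->
    exists U V, O U /\ O V /\ U x /\ V y /\
      (forall a b, U a -> V b -> W (m a b)).

Definition associative {X : Type} (m : X -> X -> X) : Prop :=
  forall x y z, m x (m y z) = m (m x y) z.

Definition is_topological_semigroup {X : Type} (O : (X -> Prop) -> Prop)
  (m : X -> X -> X) : Prop :=
  associative m /\ is_topology O /\ continuous_mul O m.

Definition covers {X : Type} (F : (X -> Prop) -> Prop) : Prop :=
  forall x, exists U, F U /\ U x.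

Definition has_finite_subcover {X : Type} (F : (X -> Prop) -> Prop) : Prop :=
  exists l : list (X -> Prop), (forall U, In U l -> F U) /\
     (forall x, exists U, In U l /\ U x).

Definition compact {X : Type} (O : (X -> Prop) -> Prop) : Prop :=
  forall F, (forall U, F U -> O U) -> covers F -> has_finite_subcover F.

Definition clopen {X : Type} (O : (X -> Prop) -> Prop) (U : X -> Prop) : Prop :=
  O U /\ O (fun x => ~ U x).

Definition clp_compact {X : Type} (O : (X -> Prop) -> Prop) : Prop :=
  forall F, (forall U, F U -> clopen O U) -> covers F -> has_finite_subcover F.

Definition semigroup_embedding {X Y : Type}
  (OX : (X -> Prop) -> Prop) (mX : X -> X -> X)
  (OY : (Y -> Prop) -> Prop) (mY : Y -> Y -> Y) (f : X -> Y) : Prop :=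
  (forall x y, f x = f y -> x = y) /\
  (forall x y, f (mX x y) = mY (f x) (f y)) /\
  (forall U, OX U <-> exists V, OY V /\ forall x, U x <-> V (f x)).

Definition dense_image {X Y : Type} (OY : (Y -> Prop) -> Prop) (f : X -> Y) : Prop :=
  forall V, OY V -> (exists y, V y) -> exists x, V (f x).

(** The topology tau_c on G(T): non-zero elements are isolated and the
    neighbourhoods of 0 are the cofinite sets containing 0. *)
Definition cofinite {X : Type} (U : X -> Prop) : Prop :=
  exists l : list X, forall x, ~ U x -> In x l.

Definition tau_c (U : GT -> Prop) : Prop := U GZero -> cofinite U.

From Stdlib Require Import Arith Lia List.
From Stdlib Require Import Classical FunctionalExtensionality PropExtensionality ProofIrrelevance.

(* Every nonzero element of G(T) is isolated in a Hausdorff semigroup topology tau, so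
   tau contains tau_c, and tau is compact exactly when all neighbourhoods of 0 are
   cofinite, i.e. tau = tau_c.  Conversely, let f embed G(T) densely into a CLP-compact
   S.  The points f g (g <> 0) remain isolated in S, f 0 is a zero of S, and a closed
   discrete subset of a CLP-compact space is finite; hence infinitely many elements
   outside a neighbourhood W of f 0 would accumulate "at infinity" at some y in S.  For
   vertices this fails because y y = f 0 (distinct vertices are orthogonal) while y y is
   also a limit of idempotents outside W.  For paths u = u r(u) it fails because
   y f 0 = f 0 and the vertices eventually lie in any neighbourhood of f 0; inverse paths
   are symmetric.  Since u v^{-1} is a path times an inverse path of the same height, W
   contains all elements of large height, so tau = tau_c. *)

Lemma pred_ext {X} (U V : X -> Prop) : (forall x, U x <-> V x) -> U = V.
Proof.
  intro H. apply functional_extensionality; intro x.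
  apply propositional_extensionality; auto.
Qed.

Definition finite {X} (D : X -> Prop) : Prop := exists l : list X, forall x, D x -> In x l.

Definition continuous {X} (O : (X -> Prop) -> Prop) (h : X -> X) : Prop :=
  forall W, O W -> O (fun x => W (h x)).

Lemma finite_preimage_inj {X Y} (f : X -> Y) (B : X -> Prop) :
  (forall x y, f x = f y -> x = y) ->
  finite (fun z => exists x, B x /\ z = f x) -> finite B.
Proof.
  intros f_inj [l Hl]. revert B Hl. induction l as [|a l IH]; intros B Hl.
  - exists nil. intros x Bx. apply (Hl (f x)). eauto.
  - destruct (IH (fun x => B x /\ f x <> a)) as [l' Hl'].
    { intros z [x [[Bx fxa] ->]]. destruct (Hl (f x)) as [E|]; eauto. congruence. }
    destruct (classic (exists x0, f x0 = a)) as [[x0 fx0]|no_preimage].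
    + exists (x0 :: l'). intros x Bx. destruct (classic (f x = a)) as [fxa|fxa].
      * left. apply f_inj. congruence.
      * right. apply Hl'. auto.
    + exists l'. intros x Bx. apply Hl'. split; auto. intro fxa. apply no_preimage; eauto.
Qed.

Section Topology.
Variables (X : Type) (O : (X -> Prop) -> Prop).
Hypothesis O_top : is_topology O.
Hypothesis O_hausdorff : hausdorff O.

Lemma open_inter (U V : X -> Prop) : O U -> O V -> O (fun x => U x /\ V x).
Proof. apply O_top. Qed.

Lemma open_of_nbhds (U : X -> Prop) :
  (forall x, U x -> exists V, O V /\ V x /\ forall z, V z -> U z) -> O U.
Proof.
  intro H. destruct O_top as [_ [O_union _]].
  replace U with (fun x => exists V, (O V /\ forall z, V z -> U z) /\ V x).
  - apply O_union. intros V [OV _]; exact OV.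
  - apply pred_ext; intro x; split.
    + intros [V [[_ VU] Vx]]; auto.
    + intro Ux. destruct (H x Ux) as [V [OV [Vx VU]]]. exists V; auto.
Qed.

Lemma open_compl_point (a : X) : O (fun x => x <> a).
Proof.
  apply open_of_nbhds. intros x xa.
  destruct (O_hausdorff x a xa) as [U [V [OU [OV [Ux [Va UV]]]]]].
  exists U. repeat split; auto. intros z Uz ->. exact (UV a Uz Va).
Qed.

Lemma open_avoid (P : X -> Prop) (l : list X) :
  O (fun x => forall a, In a l -> P a -> x <> a).
Proof.
  induction l as [|b l IH]; apply open_of_nbhds; intros x Hx.
  - exists (fun _ => True). repeat split; [apply O_top | intros z _ a []].
  - destruct (classic (P b)) as [Pb|nPb].
    + exists (fun z => z <> b /\ forall a, In a l -> P a -> z <> a).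
      split; [apply open_inter; [apply open_compl_point | exact IH]|].
      split; [split; intros; apply Hx; simpl; auto|].
      intros z [zb zl] a [<-|al] Pa; auto.
    + exists (fun z => forall a, In a l -> P a -> z <> a).
      split; [exact IH|]. split; [intros; apply Hx; simpl; auto|].
      intros z zl a [<-|al] Pa; [contradiction | auto].
Qed.

Lemma cofinite_open (U : X -> Prop) : cofinite U -> O U.
Proof.
  intros [l Hl]. apply open_of_nbhds. intros x Ux.
  exists (fun z => forall a, In a l -> ~ U a -> z <> a).
  split; [apply open_avoid|]. split.
  - intros a _ nUa ->. contradiction.
  - intros z Hz. apply NNPP; intro nUz. exact (Hz z (Hl z nUz) nUz eq_refl).
Qed.

Lemma continuous_mul_l (m : X -> X -> X) g : continuous_mul O m -> continuous O (m g).
Proof.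
  intros m_cont W OW. apply open_of_nbhds. intros y Wgy.
  destruct (m_cont g y W OW Wgy) as [U [V [_ [OV [Ug [Vy UV]]]]]].
  exists V. repeat split; auto.
Qed.

Lemma continuous_mul_r (m : X -> X -> X) g :
  continuous_mul O m -> continuous O (fun x => m x g).
Proof.
  intros m_cont W OW. apply open_of_nbhds. intros y Wyg.
  destruct (m_cont y g W OW Wyg) as [U [V [OU [_ [Uy [Vg UV]]]]]].
  exists U. repeat split; auto.
Qed.

Lemma continuous_mul_flip (m : X -> X -> X) :
  continuous_mul O m -> continuous_mul O (fun x y => m y x).
Proof.
  intros m_cont x y W OW Wyx.
  destruct (m_cont y x W OW Wyx) as [U [V [OU [OV [Uy [Vx UV]]]]]].
  exists V, U. repeat split; auto.
Qed.

Lemma open_neq_maps (h1 h2 : X -> X) :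
  continuous O h1 -> continuous O h2 -> O (fun x => h1 x <> h2 x).
Proof.
  intros h1_cont h2_cont. apply open_of_nbhds. intros x hx.
  destruct (O_hausdorff _ _ hx) as [U [V [OU [OV [Uh1 [Vh2 UV]]]]]].
  exists (fun z => U (h1 z) /\ V (h2 z)).
  split; [apply open_inter; auto|]. split; [auto|].
  intros z [Uz Vz] E. rewrite E in Uz. exact (UV _ Uz Vz).
Qed.

Lemma dense_image_eq {Y} (f : Y -> X) (h : X -> X) (c : X) :
  continuous O h -> dense_image O f -> (forall y, h (f y) = c) -> forall x, h x = c.
Proof.
  intros h_cont f_dense hf x. apply NNPP; intro hx.
  destruct (f_dense _ (h_cont _ (open_compl_point c)) (ex_intro _ x hx)) as [y hy].
  exact (hy (hf y)).
Qed.

Lemma dense_embedding_isolated {Y} (OY : (Y -> Prop) -> Prop) (mY : Y -> Y -> Y)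
  (m : X -> X -> X) (f : Y -> X) (y : Y) :
  semigroup_embedding OY mY O m f -> dense_image O f ->
  OY (fun z => z = y) -> O (fun x => x = f y).
Proof.
  intros [f_inj [_ f_open]] f_dense Oy.
  destruct (proj1 (f_open _) Oy) as [V [OV HV]].
  replace (fun x => x = f y) with V; [exact OV|].
  apply pred_ext; intro x; split; [|intros ->; apply HV; reflexivity].
  intro Vx. apply NNPP; intro xy.
  destruct (f_dense (fun z => V z /\ z <> f y)) as [z [Vz zy]].
  - apply open_inter; [exact OV | apply open_compl_point].
  - exists x; auto.
  - apply zy, f_equal, HV, Vz.
Qed.

Lemma compact_clp_compact : compact O -> clp_compact O.
Proof. intros O_comp F F_clopen. apply O_comp. intros U FU. apply F_clopen, FU. Qed.

Lemma cofinite_of_subcover (U : X -> Prop) (l : list (X -> Prop)) :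
  (forall x, exists V, In V l /\ V x) ->
  (forall V, In V l -> (forall x, V x -> U x) \/ exists a, forall x, V x -> x = a) ->
  cofinite U.
Proof.
  intros l_cover l_shape.
  assert (outside : exists pts, forall x, (exists V, In V l /\ V x) -> U x \/ In x pts).
  { clear l_cover. induction l as [|V l IH].
    - exists nil. intros x [V [[] _]].
    - destruct IH as [pts Hpts]; [intros; apply l_shape; simpl; auto|].
      destruct (l_shape V (or_introl eq_refl)) as [VU | [a Va]].
      + exists pts. intros x [W [[<-|Wl] Wx]]; auto. apply Hpts; eauto.
      + exists (a :: pts). intros x [W [[<-|Wl] Wx]].
        * right. left. symmetry. auto.
        * destruct (Hpts x) as [?|?]; eauto. right. right. auto. }
  destruct outside as [pts Hpts]. exists pts. intros x nUx.
  destruct (Hpts x (l_cover x)); [contradiction | auto].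
Qed.

Lemma cofinite_of_compact (U : X -> Prop) :
  compact O -> (forall x, ~ U x -> O (fun y => y = x)) -> O U -> cofinite U.
Proof.
  intros O_comp isolated OU.
  destruct (O_comp (fun V => V = U \/ exists a, ~ U a /\ V = (fun y => y = a)))
    as [l [lF l_cover]].
  - intros V [-> | [a [nUa ->]]]; auto.
  - intro x. destruct (classic (U x)) as [Ux|nUx].
    + exists U; auto.
    + exists (fun y => y = x). split; eauto.
  - apply (cofinite_of_subcover U l l_cover).
    intros V HV. destruct (lF V HV) as [-> | [a [_ ->]]]; [left | right]; eauto.
Qed.

Lemma clp_compact_closed_discrete_finite (D : X -> Prop) :
  clp_compact O -> O (fun x => ~ D x) -> (forall x, D x -> O (fun y => y = x)) ->
  finite D.
Proof.
  intros O_clp D_closed isolated.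
  destruct (O_clp (fun V => V = (fun x => ~ D x) \/ exists a, D a /\ V = (fun y => y = a)))
    as [l [lF l_cover]].
  - intros V [-> | [a [Da ->]]]; split; auto.
    + apply open_of_nbhds. intros x nnDx. apply NNPP in nnDx.
      exists (fun y => y = x). repeat split; auto. intros z ->. auto.
    + apply open_compl_point.
  - intro x. destruct (classic (D x)) as [Dx|nDx].
    + exists (fun y => y = x). split; eauto.
    + exists (fun x => ~ D x); auto.
  - destruct (cofinite_of_subcover (fun x => ~ D x) l l_cover) as [pts Hpts].
    + intros V HV. destruct (lF V HV) as [-> | [a [_ ->]]]; [left | right]; eauto.
    + exists pts. intros x Dx. apply Hpts. auto.
Qed.

Lemma compact_of_cofinite_nbhds (x0 : X) :
  (forall U, O U -> U x0 -> cofinite U) -> compact O.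
Proof.
  intros nbhd_cofinite F F_open F_cover.
  destruct (F_cover x0) as [U0 [FU0 U0x0]].
  destruct (nbhd_cofinite U0 (F_open U0 FU0) U0x0) as [far far_in].
  assert (pick : forall pts : list X, exists l, (forall V, In V l -> F V) /\
            forall x, In x pts -> exists V, In V l /\ V x).
  { induction pts as [|a pts IH].
    - exists nil. split; [intros V [] | intros x []].
    - destruct IH as [l [lF l_cover]]. destruct (F_cover a) as [V [FV Va]].
      exists (V :: l). split; [intros W [<-|Wl]; auto|].
      intros x [<-|xl]; [exists V; simpl; auto|].
      destruct (l_cover x xl) as [W [? ?]]. exists W; simpl; auto. }
  destruct (pick far) as [l [lF l_cover]].
  exists (U0 :: l). split; [intros W [<-|Wl]; auto|].
  intro x. destruct (classic (U0 x)) as [U0x|nU0x]; [exists U0; simpl; auto|].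
  destruct (l_cover x (far_in x nU0x)) as [W [? ?]]. exists W; simpl; auto.
Qed.

End Topology.

Lemma GPath_eq a b c ha hb a' b' c' ha' hb' :
  a = a' -> b = b' -> c = c' -> GPath a b c ha hb = GPath a' b' c' ha' hb'.
Proof. intros -> -> ->. f_equal; apply proof_irrelevance. Qed.

Definition height (x : GT) : nat := match x with GZero => 0 | GPath _ _ c _ _ => c end.

Lemma gmul_GPath_match a b c b' c' d ha hb hb2 hb' h1 h2 :
  d = Nat.max c c' ->
  gmul (GPath a b c ha hb) (GPath b b' c' hb2 hb') = GPath a b' d h1 h2.
Proof. intro hd. simpl. destruct (Nat.eq_dec b b); [apply GPath_eq | ]; congruence. Qed.

Lemma gmul_GPath_mismatch a b c a' b' c' ha hb ha' hb' :
  b <> a' -> gmul (GPath a b c ha hb) (GPath a' b' c' ha' hb') = GZero.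
Proof. simpl. destruct (Nat.eq_dec b a'); congruence. Qed.

Lemma gmul_zero_r x : gmul x GZero = GZero.
Proof. destruct x; reflexivity. Qed.

Lemma gmul_assoc : associative gmul.
Proof.
  intros [|a b c ha hb] [|a' b' c' ha' hb'] [|a'' b'' c'' ha'' hb'']; simpl; auto;
  repeat (destruct Nat.eq_dec; simpl); auto; try (apply GPath_eq; lia); congruence.
Qed.

Lemma gmul_gvertex_gvertex n m :
  gmul (gvertex n) (gvertex m) = if Nat.eq_dec n m then gvertex n else GZero.
Proof.
  unfold gvertex, gmul. destruct (Nat.eq_dec n m); [apply GPath_eq; lia | reflexivity].
Qed.

Lemma GPath_factor a b c ha hb :
  GPath a b c ha hb = gmul (GPath a c c ha (le_n c)) (GPath c b c (le_n c) hb).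
Proof. symmetry. apply gmul_GPath_match. lia. Qed.

Definition mkGPath (a b c : nat) : GT :=
  match le_dec a c, le_dec b c with
  | left ha, left hb => GPath a b c ha hb
  | _, _ => GZero
  end.

Definition elements_upto (N : nat) : list GT :=
  GZero :: flat_map (fun c => flat_map (fun a =>
    map (fun b => mkGPath a b c) (seq 0 (S N))) (seq 0 (S N))) (seq 0 (S N)).

Lemma in_elements_upto N x : height x <= N -> In x (elements_upto N).
Proof.
  destruct x as [|a b c ha hb]; intro cN; [left; reflexivity | right]; simpl in cN.
  apply in_flat_map; exists c; split; [apply in_seq; lia|].
  apply in_flat_map; exists a; split; [apply in_seq; lia|].
  apply in_map_iff; exists b; split; [|apply in_seq; lia].
  unfold mkGPath. destruct (le_dec a c), (le_dec b c); try lia. apply GPath_eq; auto.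
Qed.

Lemma finite_bounded_height (B : GT -> Prop) :
  finite B -> exists N, forall x, B x -> height x <= N.
Proof.
  intros [l Hl]. exists (list_max (map height l)). intros x Bx.
  pose proof (proj1 (list_max_le (map height l) _) (le_n _)) as below_max.
  rewrite Forall_forall in below_max. apply below_max, in_map, Hl, Bx.
Qed.

(* {g} is cut out by three open conditions: [gvertex a * y * gvertex b <> GZero] fixes the
   endpoints, [p * y <> y] for the path p from a to c+1 bounds the height of y by c, and
   only finitely many elements have height at most c. *)
Lemma GT_isolated (tau : (GT -> Prop) -> Prop) (g : GT) :
  is_topology tau -> hausdorff tau -> continuous_mul tau gmul ->
  g <> GZero -> tau (fun y => y = g).
Proof.
  intros tau_top tau_T2 gmul_cont g0.
  destruct g as [|a b c ha hb]; [congruence|].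
  replace (fun y => y = GPath a b c ha hb) with (fun y =>
      (gmul (gmul (gvertex a) y) (gvertex b) <> GZero /\
       gmul (GPath a a (S c) (le_S _ _ ha) (le_S _ _ ha)) y <> y) /\
      (In y (elements_upto c) -> y = GPath a b c ha hb)).
  - repeat apply open_inter; auto.
    + apply (continuous_mul_l _ _ tau_top gmul (gvertex a) gmul_cont
               (fun z => gmul z (gvertex b) <> GZero)).
      apply (continuous_mul_r _ _ tau_top gmul (gvertex b) gmul_cont
               (fun z => z <> GZero)).
      apply open_compl_point; auto.
    + apply open_neq_maps; auto; [apply continuous_mul_l; auto | intros W OW; exact OW].
    + apply cofinite_open; auto. exists (elements_upto c). intros y Hy.
      apply NNPP; intro ny. apply Hy; intro; contradiction.
  - apply pred_ext; intro y; split.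
    + intros [[sandwich moved] small_is_g]. apply small_is_g, in_elements_upto.
      destruct y as [|a' b' c' ha' hb']; [contradiction|].
      assert (a' = a) as ->.
      { destruct (Nat.eq_dec a a') as [|aa']; auto.
        unfold gvertex in sandwich. rewrite gmul_GPath_mismatch in sandwich by auto.
        exfalso. now apply sandwich. }
      destruct (le_lt_dec c' c) as [|cc']; auto.
      exfalso. apply moved, gmul_GPath_match. lia.
    + intros ->. split; [split|]; auto.
      * unfold gvertex.
        rewrite (gmul_GPath_match _ _ _ _ _ c _ _ _ _ ha hb) by lia.
        rewrite (gmul_GPath_match _ _ _ _ _ c _ _ _ _ ha hb) by lia.
        discriminate.
      * rewrite (gmul_GPath_match _ _ _ _ _ (S c) _ _ _ _ (le_S _ _ ha) (le_S _ _ hb)) by lia.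
        intro E. apply (f_equal height) in E. simpl in E. lia.
Qed.

Section TauC.
Variable tau : (GT -> Prop) -> Prop.
Hypotheses (tau_top : is_topology tau) (tau_T2 : hausdorff tau)
  (gmul_cont : continuous_mul tau gmul).

Lemma tau_c_open (U : GT -> Prop) : tau_c U -> tau U.
Proof.
  intro U_tau_c. destruct (classic (U GZero)) as [U0|nU0].
  - apply cofinite_open; auto.
  - apply open_of_nbhds; auto. intros x Ux. exists (fun y => y = x).
    split; [apply GT_isolated; auto; congruence | split; [auto | intros z ->; auto]].
Qed.

Lemma compact_open_tau_c (U : GT -> Prop) : compact tau -> tau U -> tau_c U.
Proof.
  intros tau_comp OU U0. apply (cofinite_of_compact _ tau); auto.
  intros x nUx. apply GT_isolated; auto. congruence.
Qed.

End TauC.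

Lemma compact_of_open_tau_c (tau : (GT -> Prop) -> Prop) :
  (forall U, tau U -> tau_c U) -> compact tau.
Proof. intro open_tau_c. apply (compact_of_cofinite_nbhds _ _ GZero). auto. Qed.

Section DenseClpEmbedding.
Variables (S : Type) (mS : S -> S -> S) (tauS : (S -> Prop) -> Prop) (f : GT -> S).
Hypotheses (tauS_top : is_topology tauS) (tauS_T2 : hausdorff tauS)
  (mS_cont : continuous_mul tauS mS) (tauS_clp : clp_compact tauS).
Hypotheses (f_inj : forall x y, f x = f y -> x = y)
  (f_hom : forall x y, f (gmul x y) = mS (f x) (f y))
  (f_dense : dense_image tauS f)
  (f_isolated : forall g, g <> GZero -> tauS (fun z => z = f g)).

Lemma f_zero_l y : mS (f GZero) y = f GZero.
Proof.
  apply (dense_image_eq _ _ tauS_top tauS_T2 f (mS (f GZero))); auto.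
  - apply continuous_mul_l; auto.
  - intro x. rewrite <- f_hom. reflexivity.
Qed.

Lemma f_zero_r y : mS y (f GZero) = f GZero.
Proof.
  apply (dense_image_eq _ _ tauS_top tauS_T2 f (fun z => mS z (f GZero))); auto.
  - apply continuous_mul_r; auto.
  - intro x. rewrite <- f_hom, gmul_zero_r. reflexivity.
Qed.

Definition cluster_at_infinity (B : GT -> Prop) (y : S) : Prop :=
  forall O N, tauS O -> O y -> exists x, B x /\ N < height x /\ O (f x).

Lemma bounded_of_no_cluster (B : GT -> Prop) :
  (forall x, B x -> x <> GZero) -> (forall y, ~ cluster_at_infinity B y) ->
  exists N, forall x, B x -> height x <= N.
Proof.
  intros B_nonzero no_cluster.
  assert (image_closed : tauS (fun z => ~ exists x, B x /\ z = f x)).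
  { apply open_of_nbhds; auto. intros y not_image.
    apply NNPP; intro no_nbhd. apply (no_cluster y). intros O N OO Oy.
    apply NNPP; intro none_above. apply no_nbhd.
    exists (fun z => O z /\ forall x, B x -> height x <= N -> z <> f x).
    split; [|split].
    - apply open_inter, cofinite_open; auto.
      exists (map f (elements_upto N)). intros z Hz. apply NNPP; intro notin. apply Hz.
      intros x Bx hx ->. apply notin, in_map, in_elements_upto, hx.
    - split; auto. intros x Bx _ ->. apply not_image. exists x; auto.
    - intros z [Oz low] [x [Bx ->]]. destruct (le_lt_dec (height x) N) as [hx|hx].
      + exact (low x Bx hx eq_refl).
      + apply none_above. exists x; auto. }
  apply finite_bounded_height, (finite_preimage_inj f B f_inj).
  apply (clp_compact_closed_discrete_finite _ tauS); auto.
  intros z [x [Bx ->]]. apply f_isolated, B_nonzero, Bx.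
Qed.

Lemma eventually_in_or_cluster (W : S -> Prop) (P : GT -> Prop) :
  W (f GZero) ->
  (exists N, forall x, P x -> N < height x -> W (f x)) \/
  exists y, cluster_at_infinity (fun x => P x /\ ~ W (f x)) y.
Proof.
  intro W0.
  destruct (classic (exists y, cluster_at_infinity (fun x => P x /\ ~ W (f x)) y))
    as [|no_cluster]; [right; auto | left].
  destruct (bounded_of_no_cluster (fun x => P x /\ ~ W (f x))) as [N HN].
  - intros x [_ nW] ->. contradiction.
  - intros y y_cluster. eauto.
  - exists N. intros x Px hx. apply NNPP; intro nW. specialize (HN x (conj Px nW)). lia.
Qed.

Lemma vertices_eventually_in (W : S -> Prop) :
  tauS W -> W (f GZero) -> exists N, forall n, N < n -> W (f (gvertex n)).
Proof.
  intros OW W0.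
  destruct (eventually_in_or_cluster W (fun x => exists n, x = gvertex n) W0)
    as [[N HN] | [y y_cluster]]; [exists N; intros n hn; apply HN; eauto|].
  assert (yy : mS y y = f GZero).
  { apply NNPP; intro yy.
    destruct (mS_cont y y _ (open_compl_point _ _ tauS_top tauS_T2 (f GZero)) yy)
      as [U [V [OU [OV [Uy [Vy UV]]]]]].
    destruct (y_cluster U 0 OU Uy) as [x1 [[[n ->] _] [_ Ux1]]].
    destruct (y_cluster V n OV Vy) as [x2 [[[m ->] _] [hm Vx2]]].
    apply (UV _ _ Ux1 Vx2). rewrite <- f_hom, gmul_gvertex_gvertex.
    destruct (Nat.eq_dec n m); [simpl in hm; lia | reflexivity]. }
  destruct (mS_cont y y W OW) as [U [V [OU [OV [Uy [Vy UV]]]]]]; [rewrite yy; auto|].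
  destruct (y_cluster (fun z => U z /\ V z) 0) as [x [[[n ->] nW] [_ [Ux Vx]]]];
    [apply open_inter; auto | auto |].
  exfalso. apply nW. specialize (UV _ _ Ux Vx). rewrite <- f_hom, gmul_gvertex_gvertex in UV.
  destruct (Nat.eq_dec n n); [exact UV | congruence].
Qed.

Lemma absorbed_eventually_in (side : S -> S -> S) (P : GT -> Prop) (W : S -> Prop) :
  continuous_mul tauS side -> (forall y, side y (f GZero) = f GZero) ->
  (forall x, P x -> f x = side (f x) (f (gvertex (height x)))) ->
  tauS W -> W (f GZero) -> exists N, forall x, P x -> N < height x -> W (f x).
Proof.
  intros side_cont side_zero P_absorbed OW W0.
  destruct (eventually_in_or_cluster W P W0) as [|[y y_cluster]]; auto.
  destruct (side_cont y (f GZero) W OW) as [U [V [OU [OV [Uy [V0 UV]]]]]];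
    [rewrite side_zero; auto|].
  destruct (vertices_eventually_in V OV V0) as [N HN].
  destruct (y_cluster U N OU Uy) as [x [[Px nW] [hx Ux]]].
  exfalso. apply nW. rewrite P_absorbed by auto. apply UV, HN; auto.
Qed.

Lemma eventually_in (W : S -> Prop) :
  tauS W -> W (f GZero) -> exists N, forall x, N < height x -> W (f x).
Proof.
  intros OW W0.
  destruct (mS_cont (f GZero) (f GZero) W OW) as [U [V [OU [OV [U0 [V0 UV]]]]]];
    [rewrite f_zero_l; auto|].
  destruct (absorbed_eventually_in mS (fun x => gmul x (gvertex (height x)) = x) U)
    as [N1 paths_in]; auto using f_zero_r.
  { intros x Px. rewrite <- f_hom, Px. reflexivity. }
  destruct (absorbed_eventually_in (fun a b => mS b a)
              (fun x => gmul (gvertex (height x)) x = x) V) as [N2 inv_paths_in];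
    auto using continuous_mul_flip, f_zero_l.
  { intros x Px. rewrite <- f_hom, Px. reflexivity. }
  exists (Nat.max N1 N2). intros [|a b c ha hb] hx; simpl in hx; [lia|].
  rewrite GPath_factor, f_hom.
  apply UV; [apply paths_in | apply inv_paths_in];
    try (unfold gvertex; apply gmul_GPath_match); simpl; lia.
Qed.

End DenseClpEmbedding.

Lemma dense_clp_embedding_open_tau_c (tau : (GT -> Prop) -> Prop) (S : Type)
  (mS : S -> S -> S) (tauS : (S -> Prop) -> Prop) (f : GT -> S) :
  is_topology tau -> hausdorff tau -> continuous_mul tau gmul ->
  is_topological_semigroup tauS mS -> hausdorff tauS -> clp_compact tauS ->
  semigroup_embedding tau gmul tauS mS f -> dense_image tauS f ->
  forall U, tau U -> tau_c U.
Proof.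
  intros tau_top tau_T2 gmul_cont [_ [tauS_top mS_cont]] tauS_T2 tauS_clp f_emb f_dense
    U OU U0.
  pose proof f_emb as [f_inj [f_hom f_open]].
  destruct (proj1 (f_open U) OU) as [W [OW UW]].
  assert (f_isolated : forall g, g <> GZero -> tauS (fun z => z = f g)).
  { intros g g0. apply (dense_embedding_isolated _ _ tauS_top tauS_T2 tau gmul mS); auto.
    apply GT_isolated; auto. }
  destruct (eventually_in S mS tauS f tauS_top tauS_T2 mS_cont tauS_clp f_inj f_hom f_dense
              f_isolated W OW) as [N HN]; [apply UW, U0|].
  exists (elements_upto N). intros x nUx. apply in_elements_upto.
  destruct (le_lt_dec (height x) N); auto. exfalso. apply nUx, UW, HN; auto.
Qed.

Lemma semigroup_embedding_id {X} (O : (X -> Prop) -> Prop) (m : X -> X -> X) :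
  semigroup_embedding O m O m (fun x => x).
Proof.
  split; [auto | split; [auto|]]. intro U. split.
  - intro OU. exists U. split; [auto | tauto].
  - intros [V [OV UV]]. replace U with V; auto. apply pred_ext. firstorder.
Qed.

Theorem lemma4p7 (tau : (GT -> Prop) -> Prop) :
  is_topology tau -> hausdorff tau -> continuous_mul tau gmul ->
  ((exists (S : Type) (mS : S -> S -> S) (tauS : (S -> Prop) -> Prop) (f : GT -> S),
       is_topological_semigroup tauS mS /\ hausdorff tauS /\ clp_compact tauS /\
       semigroup_embedding tau gmul tauS mS f /\ dense_image tauS f)
    <-> compact tau)
  /\ (compact tau <-> (forall U, tau U <-> tau_c U)).
Proof.
  intros tau_top tau_T2 gmul_cont.
  assert (compact_iff : compact tau <-> forall U, tau U <-> tau_c U).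
  { split.
    - intros tau_comp U. split; [apply compact_open_tau_c | apply tau_c_open]; auto.
    - intros tau_eq. apply compact_of_open_tau_c. intro U. apply tau_eq. }
  split; [split | exact compact_iff].
  - intros (S & mS & tauS & f & S_top & S_T2 & S_clp & f_emb & f_dense).
    apply compact_of_open_tau_c. eapply dense_clp_embedding_open_tau_c; eauto.
  - intro tau_comp. exists GT, gmul, tau, (fun x => x).
    split; [split; [apply gmul_assoc | auto] |].
    split; [auto | split; [apply compact_clp_compact; auto | split]].
    + apply semigroup_embedding_id.
    + intros V _ Vne. exact Vne.
Qed.
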